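(* Let $D\subset\mathbb{C}^k$ be open and let $\varphi,\psi$ be functions on $\mathbb{C}^k$ that are plurisubharmonic on $D$ with $\|\varphi\|_{L^\infty}\leq 1/2$ and $\|\psi\|_{L^\infty}\leq 1/2$. For $j=1,2$ set $\varphi_j^+:=\varphi^2+j\varphi+6$, $\varphi_j^-:=\varphi^2+j\varphi-6$, $\psi_j^+:=\psi^2+j\psi+6$, $\psi_j^-:=-\psi^2-j\psi+6$, and for $j,l\in\{1,2\}$ define on $\mathbb{C}^k\times\mathbb{C}^k$ \[\Phi_{jl}^+(z,w):=\varphi_j^+(z)\psi_l^+(w),\qquad \Phi_{jl}^-(z,w):=\varphi_j^-(z)\psi_l^-(w).\] Then the functions $\Phi_{jl}^\pm$ are all plurisubharmonic on $D\times D$. *)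

From mathcomp Require Import all_boot all_order all_algebra.
From mathcomp Require Import all_classical all_reals all_analysis.
From mathcomp Require Import complex.
Import Order.TTheory GRing.Theory Num.Theory.
Local Open Scope ring_scope.
Local Open Scope classical_set_scope.

Set Implicit Arguments.
Unset Strict Implicit.
Unset Printing Implicit Defensive.

Definition cabs {R : realType} (z : R[i]) : R :=
  let: Complex a b := z in Num.sqrt (a ^+ 2 + b ^+ 2).

Definition expi {R : realType} (t : R) : R[i] := Complex (cos t) (sin t).

(* max-norm distance on C^k (induces the Euclidean topology) *)
Definition cdist {R : realType} {k : nat} (x y : 'rV[R[i]]_k) : R :=
  \big[Num.max/0]_(j < k) cabs (x ord0 j - y ord0 j).

Definition copen {R : realType} {k : nat} (D : set 'rV[R[i]]_k) : Prop :=
  forall z, D z -> exists2 d : R, 0 < d & forall w, cdist w z < d -> D w.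

Definition usc_on {R : realType} {k : nat} (D : set 'rV[R[i]]_k)
    (u : 'rV[R[i]]_k -> R) : Prop :=
  forall z, D z -> forall e : R, 0 < e ->
    exists2 d : R, 0 < d & forall w, D w -> cdist w z < d -> u w < u z + e.

Definition psh_on {R : realType} {k : nat} (D : set 'rV[R[i]]_k)
    (u : 'rV[R[i]]_k -> R) : Prop :=
  usc_on D u /\
  forall a b : 'rV[R[i]]_k,
    (forall zeta : R[i], cabs zeta <= 1 -> D (a + zeta *: b)) ->
    ((u a)%:E <= ((2 * pi)^-1)%:E *
       \int[lebesgue_measure]_(t in `[0%R, (2 * pi)%R]%classic)
          (u (a + expi t *: b))%:E)%E.

(* D x D as a subset of C^(k+k) = C^k x C^k *)
Definition prodset {R : realType} {k : nat} (D : set 'rV[R[i]]_k)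
  : set 'rV[R[i]]_(k + k) :=
  [set x | D (lsubmx x) /\ D (rsubmx x)].

Definition tensorf {R : realType} {k : nat} (f g : 'rV[R[i]]_k -> R)
  : 'rV[R[i]]_(k + k) -> R :=
  fun x => f (lsubmx x) * g (rsubmx x).

(* For |s|, |t| <= 1/2 and j, l in [1, 2], the polynomial F with
   Phi^{+-}_jl (z, w) = F (phi z, psi w) is convex and nondecreasing in each
   variable: its Taylor remainder at any point of the square is a quadratic form
   in (s - s0, t - t0) whose diagonal coefficients are at least 19/4 and whose
   cross coefficient is at most 9 in absolute value.  Composing such an F with
   bounded psh functions yields a psh function on D x D: upper semicontinuity
   follows from the monotonicity and the bound on the slopes, and the
   sub-mean-value inequality is obtained by integrating over the circle the
   supporting plane of F at the values of (phi, psi) at the centre of the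
   disc, whose slopes are nonnegative. *)

From mathcomp Require Import all_boot all_order all_algebra.
From mathcomp Require Import all_classical all_reals all_analysis.
From mathcomp Require Import complex measurable_realfun.
From mathcomp Require Import ring lra.
Import Order.TTheory GRing.Theory Num.Theory numFieldNormedType.Exports.
Local Open Scope ring_scope.

Section MaxDistance.
Context {R : realType}.

Lemma cabs_ge0 (z : R[i]) : 0 <= cabs z.
Proof. by case: z => a b; exact: sqrtr_ge0. Qed.

Lemma cabsM (x y : R[i]) : cabs (x * y) = cabs x * cabs y.
Proof. exact: Normc.normcM. Qed.

Lemma cabs_expi (t : R) : cabs (expi t) = 1.
Proof. by rewrite /cabs /expi cos2Dsin2 sqrtr1. Qed.

Lemma cabs_Complex_le (u v : R) : cabs (Complex u v) <= `|u| + `|v|.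
Proof.
have -> : Complex u v = Complex u 0 + Complex 0 v.
  by apply/eqP; rewrite eq_complex /= addr0 add0r !eqxx.
apply: le_trans (le_normcD (Complex u 0) (Complex 0 v)) _.
by rewrite /= !expr0n /= addr0 add0r !sqrtr_sqr.
Qed.

Lemma cdist_ge0 {n : nat} (x y : 'rV[R[i]]_n) : 0 <= cdist x y.
Proof. exact: bigmax_ge_id. Qed.

Context {k : nat}.

Lemma cdist_lsubmx (w x : 'rV[R[i]]_(k + k)) :
  cdist (lsubmx w) (lsubmx x) <= cdist w x.
Proof.
apply: bigmax_le => [|j _]; first exact: cdist_ge0.
by rewrite !mxE; exact: (le_bigmax _ (fun j => cabs (w ord0 j - x ord0 j))).
Qed.

Lemma cdist_rsubmx (w x : 'rV[R[i]]_(k + k)) :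
  cdist (rsubmx w) (rsubmx x) <= cdist w x.
Proof.
apply: bigmax_le => [|j _]; first exact: cdist_ge0.
by rewrite !mxE; exact: (le_bigmax _ (fun j => cabs (w ord0 j - x ord0 j))).
Qed.

Lemma lsubmx_line (a b : 'rV[R[i]]_(k + k)) (z : R[i]) :
  lsubmx (a + z *: b) = lsubmx a + z *: lsubmx b.
Proof. by rewrite linearD linearZ. Qed.

Lemma rsubmx_line (a b : 'rV[R[i]]_(k + k)) (z : R[i]) :
  rsubmx (a + z *: b) = rsubmx a + z *: rsubmx b.
Proof. by rewrite linearD linearZ. Qed.

End MaxDistance.

Section CircleMean.
Context {R : realType}.
Local Notation I := (`[0%R, (2 * pi)%R]%classic : set R).
Local Notation mu := (@lebesgue_measure R).

Definition circle_mean (f : R -> R) : R := (2 * pi)^-1 * \int[mu]_(t in I) f t.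

Lemma measurable_circle : @measurable _ (measurableTypeR R) I.
Proof. exact: measurable_itv. Qed.

Lemma lebesgue_measure_circle : mu I = (2 * pi)%:E.
Proof.
by rewrite lebesgue_measure_itv /= lte_fin mulr_gt0 ?pi_gt0 // oppr0 adde0.
Qed.

Lemma integrable_circle_bounded (f : R -> R) (M : R) :
  measurable_fun I f -> (forall t, I t -> `|f t| <= M) ->
  mu.-integrable I (EFin \o f).
Proof.
move=> mf bf.
apply: (measurable_bounded_integrable (mu := mu) measurable_circle) => //.
  by have /= -> := lebesgue_measure_circle; exact: ltry.
exists M; split; first exact: num_real.
by move=> N /ltW MN t /bf fM; exact: le_trans fM MN.
Qed.

Lemma lee_circle_mean (f : R -> R) (x : R) : mu.-integrable I (EFin \o f) ->
  (x%:E <= ((2 * pi)^-1)%:E * \int[mu]_(t in I) (f t)%:E)%E = (x <= circle_mean f).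
Proof.
by move=> intf; rewrite -[X in (_ * X)%E]fineK ?integrable_fin_num // -EFinM lee_fin.
Qed.

Lemma circle_mean_cst (c : R) : circle_mean (fun=> c) = c.
Proof.
rewrite /circle_mean Rintegral_cst; last exact: measurable_circle.
have /= -> := lebesgue_measure_circle.
by rewrite mulrCA mulVf ?mulr1 // gt_eqF // mulr_gt0 ?pi_gt0.
Qed.

Section Linearity.
Context {f g : R -> R}.
Hypotheses (intf : mu.-integrable I (EFin \o f)) (intg : mu.-integrable I (EFin \o g)).

Lemma integrable_circleD : mu.-integrable I (EFin \o (fun t => f t + g t)).
Proof.
move: (integrableD measurable_circle intf intg).
by apply: eq_integrable => [|t _]; [exact: measurable_circle|].
Qed.

Lemma integrable_circleZ (a : R) : mu.-integrable I (EFin \o (fun t => a * f t)).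
Proof.
move: (integrableZl measurable_circle a intf).
by apply: eq_integrable => [|t _]; [exact: measurable_circle|].
Qed.

Lemma circle_meanD : circle_mean (fun t => f t + g t) = circle_mean f + circle_mean g.
Proof. by rewrite /circle_mean (RintegralD measurable_circle intf intg) mulrDr. Qed.

Lemma circle_meanZ (a : R) : circle_mean (fun t => a * f t) = a * circle_mean f.
Proof. by rewrite /circle_mean (RintegralZl a measurable_circle intf) mulrCA. Qed.

Lemma le_circle_mean : (forall t, I t -> f t <= g t) -> circle_mean f <= circle_mean g.
Proof.
move=> fg; rewrite ler_wpM2l ?invr_ge0 ?mulr_ge0 ?pi_ge0 //.
exact: le_Rintegral measurable_circle intf intg fg.
Qed.

End Linearity.

Lemma integrable_circle_cst (c : R) : mu.-integrable I (EFin \o fun=> c).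
Proof.
by apply: (integrable_circle_bounded _ `|c|) => //; exact: measurable_cst.
Qed.

Lemma circle_mean_ge_affine (f1 f2 g : R -> R) (x1 x2 y a1 a2 : R) :
  mu.-integrable I (EFin \o f1) -> mu.-integrable I (EFin \o f2) ->
  mu.-integrable I (EFin \o g) -> 0 <= a1 -> 0 <= a2 ->
  (forall t, I t -> y + a1 * (f1 t - x1) + a2 * (f2 t - x2) <= g t) ->
  x1 <= circle_mean f1 -> x2 <= circle_mean f2 -> y <= circle_mean g.
Proof.
move=> if1 if2 ig a10 a20 minor mean1 mean2.
set c := y - a1 * x1 - a2 * x2.
have iaf := integrable_circleD (integrable_circleZ if1 a1) (integrable_circleZ if2 a2).
have ic := integrable_circle_cst c.
have : circle_mean (fun t => c + (a1 * f1 t + a2 * f2 t)) <= circle_mean g.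
  by apply: le_circle_mean (integrable_circleD ic iaf) ig _ => t /minor; rewrite /c; lra.
rewrite (circle_meanD ic iaf) circle_mean_cst.
rewrite (circle_meanD (integrable_circleZ if1 a1) (integrable_circleZ if2 a2)).
rewrite (circle_meanZ if1) (circle_meanZ if2).
by have := ler_wpM2l a10 mean1; have := ler_wpM2l a20 mean2; rewrite /c; lra.
Qed.

End CircleMean.

Section Circle.
Context {R : realType} {k : nat}.
Implicit Types (a b : 'rV[R[i]]_k) (u : 'rV[R[i]]_k -> R).

Lemma cdist_circle_near a b (t0 d : R) : 0 < d ->
  \forall t \near t0, cdist (a + expi t *: b) (a + expi t0 *: b) < d.
Proof.
move=> d0.
pose M := \big[Num.max/0]_(j < k) cabs (b ord0 j).
have M0 : 0 <= M := bigmax_ge_id _ _ _ _.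
have eta0 : 0 < d / (M + 1) / 2 by rewrite !divr_gt0 // ltr_wpDl.
near=> t.
have hcos : `|cos t - cos t0| < d / (M + 1) / 2.
  by rewrite distrC; near: t; exact: (cvgrPdist_lt _ _).1 (@continuous_cos R t0) _ eta0.
have hsin : `|sin t - sin t0| < d / (M + 1) / 2.
  by rewrite distrC; near: t; exact: (cvgrPdist_lt _ _).1 (@continuous_sin R t0) _ eta0.
have hexpi : cabs (expi t - expi t0) <= d / (M + 1).
  apply: le_trans (cabs_Complex_le (cos t - cos t0) (sin t - sin t0)) _; lra.
apply: bigmax_lt => // j _; rewrite !mxE.
have -> : a ord0 j + expi t * b ord0 j - (a ord0 j + expi t0 * b ord0 j)
   = (expi t - expi t0) * b ord0 j by ring.
rewrite cabsM.
apply: le_lt_trans (_ : d / (M + 1) * M < d).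
  apply: ler_pM => //; [exact: cabs_ge0 | exact: cabs_ge0 |].
  exact: (le_bigmax _ (fun j => cabs (b ord0 j))).
by rewrite mulrAC ltr_pdivrMr ?ltr_wpDl // mulrDr mulr1 ltrDl.
Unshelve. all: by end_near.
Qed.

(* The library only provides measurability of lower semicontinuous functions,
   hence the detour through [- u]. *)
Lemma measurable_circle_usc (D : set 'rV[R[i]]_k) u a b :
  usc_on D u -> (forall t, D (a + expi t *: b)) ->
  measurable_fun (`[0%R, (2 * pi)%R]%classic) (fun t => u (a + expi t *: b)).
Proof.
move=> usc_u Dcircle.
have lsc : lower_semicontinuous (fun t : R => (- u (a + expi t *: b))%:E).
  move=> x r; rewrite lte_fin => ltr.
  have [d d0 hd] := usc_u _ (Dcircle x) (- u (a + expi x *: b) - r) ltac:(lra).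
  exists (fun t : R => cdist (a + expi t *: b) (a + expi x *: b) < d).
    exact: cdist_circle_near.
  by move=> y /= /(hd _ (Dcircle y)); rewrite lte_fin; lra.
have mN : measurable_fun setT (fun t => - u (a + expi t *: b)).
  by apply/measurable_EFinP; exact: lower_semicontinuous_measurable.
apply: (measurable_funS _ (@subsetT _ _)) => //.
by under eq_fun do rewrite -[u _]opprK; exact: measurable_funN.
Qed.

Lemma integrable_circle_usc {D : set 'rV[R[i]]_k} {u a b} {c : R} :
  usc_on D u -> (forall z, D z -> `|u z| <= c) -> (forall t, D (a + expi t *: b)) ->
  lebesgue_measure.-integrable (`[0%R, (2 * pi)%R]%classic)
    (EFin \o fun t => u (a + expi t *: b)).
Proof.
move=> usc_u bound_u Dcircle; apply: (integrable_circle_bounded _ c) => [|t _].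
  exact: measurable_circle_usc usc_u Dcircle.
exact: bound_u.
Qed.

End Circle.

Section BoxSubgradients.
Context {R : realType}.

(* Supporting planes with slopes in [[0, M]] at every point of the square
   [[-r, r]^2]: [F] is convex there and nondecreasing in each variable. *)
Definition has_box_subgradients (r M : R) (F : R -> R -> R) : Prop :=
  forall s0 t0, `|s0| <= r -> `|t0| <= r ->
  exists a b, [/\ 0 <= a <= M, 0 <= b <= M &
    forall s t, `|s| <= r -> `|t| <= r ->
      F s0 t0 + a * (s - s0) + b * (t - t0) <= F s t].

Context {r M : R} {F : R -> R -> R}.
Hypothesis subF : has_box_subgradients r M F.

Lemma box_subgradients_ge0 : 0 <= r -> 0 <= M.
Proof.
move=> r0; have r00 : `|(0 : R)| <= r by rewrite normr0.
have [a [b [/andP[a0 aM] _ _]]] := subF _ _ r00 r00.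
exact: le_trans aM.
Qed.

Lemma box_subgradients_le {s t s0 t0 d : R} :
  `|s| <= r -> `|t| <= r -> `|s0| <= r -> `|t0| <= r ->
  0 <= d -> s - s0 <= d -> t - t0 <= d -> F s t <= F s0 t0 + 2 * M * d.
Proof.
move=> rs rt rs0 rt0 d0 ds dt.
have [a [b [/andP[a0 aM] /andP[b0 bM] supp]]] := subF _ _ rs rt.
have := supp _ _ rs0 rt0.
have := ler_wpM2l a0 ds; have := ler_wpM2r d0 aM.
have := ler_wpM2l b0 dt; have := ler_wpM2r d0 bM.
lra.
Qed.

Lemma box_subgradients_bounded {s t : R} : `|s| <= r -> `|t| <= r ->
  `|F s t| <= `|F 0 0| + 2 * M * r.
Proof.
move=> rs rt; have r0 : 0 <= r := le_trans (normr_ge0 s) rs.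
have r00 : `|(0 : R)| <= r by rewrite normr0.
have := box_subgradients_le rs rt r00 r00 r0.
have := box_subgradients_le r00 r00 rs rt r0.
move: rs rt; rewrite !ler_norml !sub0r !subr0 => /andP[? ?] /andP[? ?] low up.
have := up ltac:(lra) ltac:(lra); have := low ltac:(lra) ltac:(lra).
have := ler_norm (F 0 0); have := ler_norm (- F 0 0); rewrite normrN; lra.
Qed.

End BoxSubgradients.

Section Composition.
Context {R : realType} {k : nat}.
Context {D : set 'rV[R[i]]_k} {phi psi : 'rV[R[i]]_k -> R}.
Context {r M : R} {F : R -> R -> R}.
Hypotheses (phi_r : forall z, D z -> `|phi z| <= r)
  (psi_r : forall z, D z -> `|psi z| <= r) (subF : has_box_subgradients r M F).

Let G x := F (phi (lsubmx x)) (psi (rsubmx x)).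

Lemma usc_on_box_comp : usc_on D phi -> usc_on D psi -> usc_on (prodset D) G.
Proof.
move=> usc_phi usc_psi x [Dl Dr] e e0.
have M0 : 0 <= M.
  by apply: box_subgradients_ge0 subF _; exact: le_trans (normr_ge0 _) (phi_r _ Dl).
have d0 : 0 < e / (2 * M + 1) by rewrite divr_gt0 // ltr_wpDl ?mulr_ge0.
have [d1 d10 near_phi] := usc_phi _ Dl _ d0.
have [d2 d20 near_psi] := usc_psi _ Dr _ d0.
exists (Num.min d1 d2) => [|w [Dwl Dwr]]; first by rewrite lt_min d10 d20.
rewrite lt_min => /andP[w1 w2].
have ltl := near_phi _ Dwl (le_lt_trans (cdist_lsubmx w x) w1).
have ltr := near_psi _ Dwr (le_lt_trans (cdist_rsubmx w x) w2).
apply: le_lt_trans (box_subgradients_le subF (phi_r _ Dwl) (psi_r _ Dwr)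
  (phi_r _ Dl) (psi_r _ Dr) (ltW d0) _ _) _; [lra | lra |].
rewrite ltrD2l mulrA ltr_pdivrMr ?ltr_wpDl ?mulr_ge0 //.
by rewrite mulrDr mulr1 mulrC ltrDl.
Qed.

Lemma psh_on_box_comp : psh_on D phi -> psh_on D psi -> psh_on (prodset D) G.
Proof.
move=> [usc_phi mean_phi] [usc_psi mean_psi].
have usc_G := usc_on_box_comp usc_phi usc_psi.
split=> // a b disc.
have discl z : cabs z <= 1 -> D (lsubmx a + z *: lsubmx b).
  by move=> /disc[]; rewrite lsubmx_line.
have discr z : cabs z <= 1 -> D (rsubmx a + z *: rsubmx b).
  by move=> /disc[]; rewrite rsubmx_line.
have circle (t : R) : cabs (expi t) <= 1 by rewrite cabs_expi.
have [Dl Dr] : D (lsubmx a) /\ D (rsubmx a).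
  have c0 : cabs (0 : R[i]) <= 1 by rewrite /cabs /= expr0n addr0 sqrtr0 ler01.
  by move: (disc _ c0); rewrite scale0r addr0.
have iP := integrable_circle_usc usc_phi phi_r (fun t => discl _ (circle t)).
have iQ := integrable_circle_usc usc_psi psi_r (fun t => discr _ (circle t)).
have G_bound z : prodset D z -> `|G z| <= `|F 0 0| + 2 * M * r.
  by move=> [Dzl Dzr]; exact: (box_subgradients_bounded subF (phi_r _ Dzl) (psi_r _ Dzr)).
have iG := integrable_circle_usc usc_G G_bound (fun t => disc _ (circle t)).
rewrite lee_circle_mean //.
have := mean_phi _ _ discl; rewrite lee_circle_mean // => meanP.
have := mean_psi _ _ discr; rewrite lee_circle_mean // => meanQ.
have [a1 [a2 [/andP[a10 _] /andP[a20 _] supp]]] := subF _ _ (phi_r _ Dl) (psi_r _ Dr).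
apply: circle_mean_ge_affine iP iQ iG a10 a20 _ meanP meanQ => t _.
rewrite /G lsubmx_line rsubmx_line; apply: supp.
  exact: (phi_r _ (discl _ (circle t))).
exact: (psi_r _ (discr _ (circle t))).
Qed.

End Composition.

Section QuadraticProducts.
Context {R : realType}.

Lemma quad_form_ge0 (m A B C x y : R) : m <= A -> m <= C -> `|B| <= 2 * m ->
  0 <= A * x ^+ 2 + B * (x * y) + C * y ^+ 2.
Proof.
rewrite ler_norml => mA mC /andP[lB uB].
have : 0 <= (A - m) * x ^+ 2 by rewrite mulr_ge0 ?sqr_ge0 ?subr_ge0.
have : 0 <= (C - m) * y ^+ 2 by rewrite mulr_ge0 ?sqr_ge0 ?subr_ge0.
have : 0 <= (2 * m + B) * (x + y) ^+ 2 by rewrite mulr_ge0 ?sqr_ge0 //; lra.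
have : 0 <= (2 * m - B) * (x - y) ^+ 2 by rewrite mulr_ge0 ?sqr_ge0 ?subr_ge0.
rewrite sqrrB sqrrD; lra.
Qed.

(* [e = 1] gives [Phi^+_jl] and [e = -1] gives [Phi^-_jl] as functions of
   [(phi z, psi w)]. *)
Definition quad_prod (e j l s t : R) : R :=
  e * ((s ^+ 2 + j * s + 6 * e) * (t ^+ 2 + l * t + 6 * e)).

Lemma quad_prod_sub_tangent (e j l s t s0 t0 : R) :
  quad_prod e j l s t - (quad_prod e j l s0 t0
      + (2 * s0 + j) * (e * (t0 ^+ 2 + l * t0 + 6 * e)) * (s - s0)
      + e * (s0 ^+ 2 + j * s0 + 6 * e) * (2 * t0 + l) * (t - t0))
    = e * (t ^+ 2 + l * t + 6 * e) * (s - s0) ^+ 2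
      + e * ((2 * s0 + j) * (t0 + t + l)) * ((s - s0) * (t - t0))
      + e * (s0 ^+ 2 + j * s0 + 6 * e) * (t - t0) ^+ 2.
Proof. by rewrite /quad_prod; ring. Qed.

Lemma derivative_quad_bounds {c s : R} : 1 <= c <= 2 -> `|s| <= 2^-1 ->
  0 <= 2 * s + c <= 3.
Proof. by rewrite ler_norml => /andP[? ?] /andP[? ?]; apply/andP; split; lra. Qed.

Variable e : R.
Hypothesis e2 : e ^+ 2 = 1.

Lemma normr_sign : `|e| = 1.
Proof.
by apply/eqP; rewrite -(@eqrXn2 _ 2) ?normr_ge0 // -normrX e2 normr1 expr1n.
Qed.

Lemma signed_quad_bounds {c s : R} : 1 <= c <= 2 -> `|s| <= 2^-1 ->
  19/4 <= e * (s ^+ 2 + c * s + 6 * e) <= 29/4.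
Proof.
move=> /andP[c1 c2] hs.
have -> : e * (s ^+ 2 + c * s + 6 * e) = 6 + e * (s ^+ 2 + c * s).
  by rewrite mulrDr (mulrCA e 6 e) -expr2 e2 mulr1 addrC.
suff : `|e * (s ^+ 2 + c * s)| <= 5/4 by rewrite ler_norml; lra.
rewrite normrM normr_sign mul1r; apply: le_trans (ler_normD _ _) _.
rewrite normrX normrM (ger0_norm (le_trans ler01 c1)).
have := ler_pM (normr_ge0 s) (normr_ge0 s) hs hs.
have := ler_pM (le_trans ler01 c1) (normr_ge0 s) c2 hs.
rewrite expr2; lra.
Qed.

Lemma quad_prod_box_subgradients (j l : R) : 1 <= j <= 2 -> 1 <= l <= 2 ->
  has_box_subgradients (2^-1) 22 (quad_prod e j l).
Proof.
move=> j12 l12 s0 t0 hs0 ht0.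
have /andP[fs0 fs0'] := signed_quad_bounds j12 hs0.
have /andP[gt0 gt0'] := signed_quad_bounds l12 ht0.
have /andP[ds0 ds0'] := derivative_quad_bounds j12 hs0.
have /andP[dt0 dt0'] := derivative_quad_bounds l12 ht0.
exists ((2 * s0 + j) * (e * (t0 ^+ 2 + l * t0 + 6 * e))),
       (e * (s0 ^+ 2 + j * s0 + 6 * e) * (2 * t0 + l)); split.
- rewrite mulr_ge0 //=; last lra.
  by apply: le_trans (ler_pM ds0 _ ds0' gt0') _; lra.
- rewrite mulr_ge0 //=; last lra.
  by apply: le_trans (ler_pM _ dt0 fs0' dt0') _; lra.
move=> s t hs ht; rewrite -subr_ge0 quad_prod_sub_tangent.
have /andP[tt1 tt2] : 0 <= t0 + t + l <= 3.
  by move: ht0 ht l12; rewrite !ler_norml => /andP[? ?] /andP[? ?] /andP[? ?]; lra.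
apply: (quad_form_ge0 (19/4)) => //.
  by have /andP[] := signed_quad_bounds l12 ht.
rewrite normrM normr_sign mul1r ger0_norm ?mulr_ge0 //.
by apply: le_trans (ler_pM ds0 tt1 ds0' tt2) _; lra.
Qed.

End QuadraticProducts.

Lemma natr_mem12 {R : realType} (n : nat) : n \in [:: 1%N; 2%N] -> 1 <= (n%:R : R) <= 2.
Proof. by rewrite !inE => /orP[] /eqP ->; rewrite ler1n ler_nat. Qed.

Theorem lemma3p1 (R : realType) (k : nat) (D : set 'rV[R[i]]_k)
    (phi psi : 'rV[R[i]]_k -> R) :
  copen D ->
  psh_on D phi -> psh_on D psi ->
  (forall z, D z -> `|phi z| <= 2^-1) ->
  (forall z, D z -> `|psi z| <= 2^-1) ->
  forall j l : nat, (j \in [:: 1%N; 2%N]) -> (l \in [:: 1%N; 2%N]) ->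
    let phip := fun z => phi z ^+ 2 + j%:R * phi z + 6 in
    let phim := fun z => phi z ^+ 2 + j%:R * phi z - 6 in
    let psip := fun w => psi w ^+ 2 + l%:R * psi w + 6 in
    let psim := fun w => - psi w ^+ 2 - l%:R * psi w + 6 in
    psh_on (prodset D) (tensorf phip psip) /\
    psh_on (prodset D) (tensorf phim psim).
Proof.
move=> _ psh_phi psh_psi phi_r psi_r j l /(@natr_mem12 R) j12 /(@natr_mem12 R) l12 /=.
have psh_quad_prod e : e ^+ 2 = 1 ->
    psh_on (prodset D) (fun x => quad_prod e j%:R l%:R (phi (lsubmx x)) (psi (rsubmx x))).
  move=> e2; apply: psh_on_box_comp phi_r psi_r _ psh_phi psh_psi.
  exact: quad_prod_box_subgradients.
split.
- have := psh_quad_prod 1 (expr1n _ _); congr psh_on; apply/funext => x.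
  by rewrite /tensorf /quad_prod; ring.
- have N1_2 : (-1 : R) ^+ 2 = 1 by rewrite sqrrN expr1n.
  have := psh_quad_prod (-1) N1_2; congr psh_on; apply/funext => x.
  by rewrite /tensorf /quad_prod; ring.
Qed.
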